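(* For every $\alpha\in[0,1)$ and every integer $n\ge2$, the kernel $K_\alpha(x,y)=\dfrac{1}{x^2+2\cos(\pi\alpha)xy+y^2}$ on $(0,+\infty)^2$ satisfies $K_\alpha\in\mathrm{TP}_n\iff K_\alpha\in\mathrm{SR}_n$.
   Context: A kernel $K$ on $I\times I$ is $\mathrm{TP}_n$ if $\det[K(x_i,y_j)]_{1\le i,j\le m}\ge0$ for every $m\in\{1,\ldots,n\}$ and all $x_1<\cdots<x_m$, $y_1<\cdots<y_m$ in $I$; it is $\mathrm{SR}_n$ if there exist $\varepsilon_1,\ldots,\varepsilon_n\in\{-1,1\}$ with $\varepsilon_m\det[K(x_i,y_j)]_{1\le i,j\le m}\ge0$ for all such $m$ and points. *)

From HB Require Import structures.
From mathcomp Require Import all_boot all_order all_algebra.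
From mathcomp Require Import all_classical all_reals all_analysis.
Set Implicit Arguments. Unset Strict Implicit. Unset Printing Implicit Defensive.
Import Order.TTheory GRing.Theory Num.Theory.
Local Open Scope ring_scope.

Definition kernel (R : realType) := R -> R -> R.

Definition incr_in (R : realType) (I : R -> Prop) (m : nat) (x : 'I_m -> R) :=
  (forall i, I (x i)) /\ (forall i j : 'I_m, (i < j)%N -> x i < x j).

Definition kminor (R : realType) (K : kernel R) (m : nat) (x y : 'I_m -> R) : R :=
  \det (\matrix_(i < m, j < m) K (x i) (y j)).

Definition TP_n (R : realType) (I : R -> Prop) (n : nat) (K : kernel R) : Prop :=
  forall m : nat, (1 <= m <= n)%N ->
  forall x y : 'I_m -> R, incr_in I x -> incr_in I y -> 0 <= kminor K x y.

Definition SR_n (R : realType) (I : R -> Prop) (n : nat) (K : kernel R) : Prop :=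
  exists eps : nat -> R,
    (forall m : nat, (1 <= m <= n)%N -> eps m = 1 \/ eps m = -1) /\
    (forall m : nat, (1 <= m <= n)%N ->
     forall x y : 'I_m -> R, incr_in I x -> incr_in I y -> 0 <= eps m * kminor K x y).

Definition K_alpha (R : realType) (alpha : R) : kernel R :=
  fun x y => 1 / (x ^+ 2 + 2 * cos (pi * alpha) * x * y + y ^+ 2).

Definition pos_halfline (R : realType) : R -> Prop := fun x => 0 < x.

(* For alpha in [0,1) the kernel is positive and, with c = cos(pi alpha) > -1,
   K(x, y) <= 2 / ((1 + c) max(x, y)^2) while K(x, x) >= 1 / (4 x^2).  Along
   the geometric points x_i = t^i the matrix [K(x_i, x_j)] therefore has entries
   decaying like w^max(i,j) with w = t^-2 and a diagonal of size w^i, so for t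
   large its determinant is dominated by the diagonal product and is positive.
   Hence for every order m some minor is positive, which forces every sign
   epsilon_m of a sign-regular kernel to be +1. *)
From HB Require Import structures.
From mathcomp Require Import all_boot all_order all_algebra.
From mathcomp Require Import all_classical all_reals all_analysis.
From mathcomp Require Import perm ring lra.
Import Order.TTheory GRing.Theory Num.Theory.
Set Implicit Arguments. Unset Strict Implicit.
Local Open Scope ring_scope.

Lemma TP_n_SR_n (R : realType) (I : R -> Prop) (n : nat) (K : R -> R -> R) :
  TP_n I n K -> SR_n I n K.
Proof.
move=> TPK; exists (fun=> 1); split=> [m _|m mn x y Ix Iy]; first by left.
by rewrite mul1r; apply: TPK.
Qed.

Lemma SR_n_TP_n (R : realType) (I : R -> Prop) (n : nat) (K : R -> R -> R) :
  (forall m, (1 <= m <= n)%N ->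
     exists x : 'I_m -> R, incr_in I x /\ 0 < kminor K x x) ->
  SR_n I n K -> TP_n I n K.
Proof.
move=> pos_minor [eps [eps_sign SRK]] m mn x y Ix Iy.
have [eps_m | eps_m] := eps_sign m mn.
  by have := SRK m mn x y Ix Iy; rewrite eps_m mul1r.
have [z [Iz minor_gt0]] := pos_minor m mn.
by have := SRK m mn z z Iz Iz; rewrite eps_m mulN1r oppr_ge0 leNgt minor_gt0.
Qed.

Lemma sum_ord_lt_sum_maxn_perm m (s : 'S_m) : s != 1%g ->
  (\sum_(i < m) (i : nat) < \sum_(i < m) maxn i (s i))%N.
Proof.
move=> s_neq1.
have [i0 si0] : exists i0, s i0 != i0.
  apply/existsP; apply: contraR s_neq1; rewrite negb_exists => /forallP fix_s.
  by apply/eqP/permP => i; rewrite perm1; apply/eqP; rewrite -[_ == _]negbK.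
have sum_perm : \sum_(i < m) (i : nat) = \sum_(i < m) (s i : nat).
  exact: (reindex_inj (@perm_inj _ s)).
have max_ge (f : 'I_m -> nat) : (forall i : 'I_m, f i <= maxn i (s i))%N ->
    (f i0 < maxn i0 (s i0))%N -> (\sum_(i < m) f i < \sum_(i < m) maxn i (s i))%N.
  move=> f_le f_lt; rewrite (bigD1 i0) //= [X in (_ < X)%N](bigD1 i0) //=.
  by rewrite -addSn leq_add // leq_sum.
case: (ltngtP (s i0) i0) => [lt_s | gt_s | eq_s].
- rewrite sum_perm; apply: (max_ge (fun i => s i)) => [i|]; first exact: leq_maxr.
  by rewrite leq_max lt_s.
- by apply: (max_ge (fun i => i)) => [i|]; rewrite ?leq_maxl // leq_max gt_s orbT.
- by move: si0; rewrite -(inj_eq val_inj) /= eq_s eqxx.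
Qed.

Section GeometricDecay.

Variables (R : realFieldType) (m : nat) (A : 'M[R]_m) (d e w : R).
Hypotheses (A_ge0 : forall i j, 0 <= A i j) (d_ge0 : 0 <= d) (e_ge0 : 0 <= e).
Hypotheses (w_gt0 : 0 < w) (w_le1 : w <= 1).
Hypothesis A_ub : forall i j : 'I_m, A i j <= e * w ^+ maxn i j.
Hypothesis A_diag_lb : forall i : 'I_m, d * w ^+ i <= A i i.

Let S := (\sum_(i < m) (i : nat))%N.

Lemma diag_prod_lb : d ^+ m * w ^+ S <= \prod_i A i i.
Proof.
rewrite -{1}(card_ord m) -prodr_const -prodrXr -big_split /=.
by apply: ler_prod => i _; rewrite A_diag_lb andbT mulr_ge0 // exprn_ge0 // ltW.
Qed.

Lemma offdiag_prod_ub (s : 'S_m) : s != 1%g ->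
  \prod_i A i (s i) <= e ^+ m * w ^+ S.+1.
Proof.
move=> s_neq1; apply: (@le_trans _ _ (\prod_(i < m) (e * w ^+ maxn i (s i)))).
  by apply: ler_prod => i _; rewrite A_ge0 A_ub.
rewrite big_split /= prodr_const card_ord prodrXr ler_wpM2l ?exprn_ge0 //.
by apply: ler_wiXn2l; [exact: ltW | exact: w_le1 | exact: sum_ord_lt_sum_maxn_perm].
Qed.

Lemma det_gt0_geometric_decay : (m`!)%:R * e ^+ m * w < d ^+ m -> 0 < \det A.
Proof.
move=> small_w.
have term_lb (s : 'S_m) : s != 1%g ->
    - (e ^+ m * w ^+ S.+1) <= (-1) ^+ s * \prod_i A i (s i).
  move=> s_neq1; have := offdiag_prod_ub s_neq1.
  have : 0 <= \prod_i A i (s i) by apply: prodr_ge0 => i _.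
  by case: (odd_perm s); rewrite ?expr1 ?expr0 ?mulN1r ?mul1r; lra.
have offdiag_lb : - ((m`!)%:R * (e ^+ m * w ^+ S.+1)) <=
    \sum_(s : 'S_m | s != 1%g) (-1) ^+ s * \prod_i A i (s i).
  apply: le_trans (ler_sum _ term_lb); rewrite sumrN lerN2.
  rewrite -card_Sn mulr_natl -sumr_const [leRHS](bigD1 (1%g : 'S_m)) //=.
  by rewrite lerDr mulr_ge0 // exprn_ge0 // ltW.
rewrite /determinant (bigD1 (1%g : 'S_m)) //= odd_perm1 expr0 mul1r.
rewrite (eq_bigr (fun i => A i i)) => [|i _]; last by rewrite perm1.
apply: lt_le_trans (lerD diag_prod_lb offdiag_lb); rewrite exprSr.
have -> : d ^+ m * w ^+ S - (m`!)%:R * (e ^+ m * (w ^+ S * w)) =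
  w ^+ S * (d ^+ m - (m`!)%:R * e ^+ m * w) by ring.
by rewrite mulr_gt0 ?exprn_gt0 // subr_gt0.
Qed.

End GeometricDecay.

Definition quad_kernel (R : realFieldType) (c x y : R) : R :=
  1 / (x ^+ 2 + 2 * c * x * y + y ^+ 2).

Section QuadKernel.

Variables (R : realFieldType) (c : R).

Lemma quad_form_lb (x y : R) : -1 < c -> c <= 1 -> 0 < x -> 0 < y ->
  (1 + c) / 2 * (x ^+ 2 + y ^+ 2) <= x ^+ 2 + 2 * c * x * y + y ^+ 2.
Proof.
move=> c_gtN1 c_le1 x_gt0 y_gt0.
have sq_ge0 : 0 <= (1 - c) / 2 * (x - y) ^+ 2.
  by apply: mulr_ge0; [lra | exact: sqr_ge0].
have xy_ge0 : 0 <= (1 + c) * x * y.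
  by rewrite -mulrA; apply: mulr_ge0; [lra | apply: mulr_ge0; exact: ltW].
have -> : x ^+ 2 + 2 * c * x * y + y ^+ 2 =
  (1 + c) / 2 * (x ^+ 2 + y ^+ 2) + ((1 - c) / 2 * (x - y) ^+ 2 + (1 + c) * x * y).
  by field.
by rewrite lerDl addr_ge0.
Qed.

Lemma quad_kernelC (x y : R) : quad_kernel c x y = quad_kernel c y x.
Proof. by rewrite /quad_kernel; congr (1 / _); ring. Qed.

Lemma quad_kernel_gt0 (x y : R) : -1 < c -> c <= 1 -> 0 < x -> 0 < y ->
  0 < quad_kernel c x y.
Proof.
move=> c_gtN1 c_le1 x_gt0 y_gt0.
rewrite /quad_kernel div1r invr_gt0 (lt_le_trans _ (quad_form_lb c_gtN1 c_le1 x_gt0 y_gt0)) //.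
by rewrite mulr_gt0 ?addr_gt0 ?exprn_gt0 //; lra.
Qed.

Lemma quad_kernel_ub (x y : R) : -1 < c -> c <= 1 -> 0 < x -> 0 < y ->
  quad_kernel c x y <= 2 / (1 + c) / x ^+ 2.
Proof.
move=> c_gtN1 c_le1 x_gt0 y_gt0.
have form_lb := quad_form_lb c_gtN1 c_le1 x_gt0 y_gt0.
have x2_gt0 : 0 < x ^+ 2 by rewrite exprn_gt0.
have -> : 2 / (1 + c) / x ^+ 2 = ((1 + c) / 2 * x ^+ 2)^-1.
  by field; rewrite gt_eqF //=; lra.
rewrite /quad_kernel div1r lef_pV2 ?posrE ?mulr_gt0 //; last 2 first.
- by apply: lt_le_trans form_lb; rewrite mulr_gt0 ?addr_gt0 ?exprn_gt0 //; lra.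
- lra.
by apply: le_trans form_lb; rewrite ler_pM2l ?lerDl ?sqr_ge0 //; lra.
Qed.

Lemma quad_kernel_diag_lb (x : R) : -1 < c -> c <= 1 -> 0 < x ->
  1 / 4 / x ^+ 2 <= quad_kernel c x x.
Proof.
move=> c_gtN1 c_le1 x_gt0; have x2_gt0 : 0 < x ^+ 2 by rewrite exprn_gt0.
have -> : quad_kernel c x x = ((2 + 2 * c) * x ^+ 2)^-1.
  by rewrite /quad_kernel div1r expr2; congr (_^-1); ring.
rewrite div1r -invfM lef_pV2 ?posrE ?mulr_gt0 ?ler_pM2r //; lra.
Qed.

Lemma quad_kernel_geometric_minor_gt0 (m : nat) : -1 < c -> c <= 1 ->
  exists t : R, 1 < t /\ 0 < \det (\matrix_(i < m, j < m) quad_kernel c (t ^+ i) (t ^+ j)).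
Proof.
move=> c_gtN1 c_le1.
pose e := 2 / (1 + c); have e_ge1 : 1 <= e by rewrite ler_pdivlMr; lra.
pose P : R := (m`!)%:R * (4 * e) ^+ m.
have P_ge1 : 1 <= P by rewrite mulr_ege1 ?ler1n ?fact_gt0 // exprn_ege1 //; lra.
pose t := 1 + P; have t_gt1 : 1 < t by rewrite /t; lra.
have t_gt0 : 0 < t by lra.
have tX_gt0 k : 0 < t ^+ k by rewrite exprn_gt0.
pose w := (t ^+ 2)^-1.
have w_gt0 : 0 < w by rewrite invr_gt0 exprn_gt0.
have w_le1 : w <= 1 by rewrite invf_le1 ?exprn_gt0 // exprn_ege1 // ltW.
have wX k : w ^+ k = ((t ^+ k) ^+ 2)^-1 by rewrite exprVn exprAC.
have Pw_lt1 : P * w < 1 by rewrite ltr_pdivrMr ?exprn_gt0 // mul1r expr2 /t; nra.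
exists t; split=> //.
apply: (det_gt0_geometric_decay (d := 1 / 4) (e := e) (w := w)) => //.
- by move=> i j; rewrite mxE ltW // quad_kernel_gt0.
- by rewrite ltW // (lt_le_trans _ e_ge1).
- move=> i j; rewrite mxE wX.
  case: (leqP i j) => _.
    by rewrite quad_kernelC quad_kernel_ub.
  by rewrite quad_kernel_ub.
- by move=> i; rewrite mxE wX quad_kernel_diag_lb.
have -> : (m`!)%:R * e ^+ m * w = (1 / 4) ^+ m * (P * w).
  have -> : (1 / 4) ^+ m * (P * w) = (1 / 4 * 4) ^+ m * ((m`!)%:R * e ^+ m * w).
    by rewrite /P !exprMn; ring.
  by rewrite div1r mulVf ?expr1n ?mul1r.
by rewrite gtr_pMr ?exprn_gt0 //; lra.
Qed.

End QuadKernel.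

Lemma cos_pi_mul_gtN1 (R : realType) (a : R) : 0 <= a -> a < 1 -> -1 < cos (pi * a).
Proof.
move=> a_ge0 a_lt1; have pi_gt0 := pi_gt0 R.
rewrite -(cospi R) ltr_cos ?in_itv /= ?lexx ?(ltW pi_gt0) ?mulr_ge0 //.
- by rewrite -[ltRHS]mulr1 ltr_pM2l.
- by rewrite -[leRHS]mulr1 ler_pM2l // ltW.
- exact: ltW.
Qed.

Theorem corollary1 (R : realType) (alpha : R) (n : nat) :
  0 <= alpha -> alpha < 1 -> (2 <= n)%N ->
  (TP_n (@pos_halfline R) n (K_alpha alpha) <-> SR_n (@pos_halfline R) n (K_alpha alpha)).
Proof.
move=> alpha_ge0 alpha_lt1 _.
split; first exact: TP_n_SR_n.
apply: SR_n_TP_n => m _.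
have [t [t_gt1 minor_gt0]] := quad_kernel_geometric_minor_gt0 m
  (cos_pi_mul_gtN1 alpha_ge0 alpha_lt1) (cos_le1 (pi * alpha)).
exists (fun i => t ^+ i); split=> //; split=> [i | i j ij].
- by rewrite /pos_halfline exprn_gt0 // (lt_trans ltr01).
- by rewrite ltr_eXn2l.
Qed.
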